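(* Let $L$ be a positive definite even lattice with dual lattice $L^\circ$, and let $\sigma$ be an isometry of $L$ of order $p\ge 2$ which is fixed-point-free on $L$ (extended $\mathbb{Q}$-linearly to $L^\circ$). Let $s=p$ if $p$ is even and $s=2p$ if $p$ is odd, and let $c^\sigma: L\times L\to \mathbb{Z}_s$ be defined by $$c^\sigma(\alpha,\beta)=\frac{s}{p}\sum_{i=1}^{p-1}\langle i\sigma^i(\alpha),\beta\rangle + s\mathbb{Z}.$$ Let $R_L^\sigma=\{\alpha\in L \mid c^\sigma(\alpha,\beta)=0 \text{ for all }\beta\in L\}$. Then $$R_L^\sigma=\big((1-\sigma)L^\circ\big)\cap L.$$
   Context: $L^\circ=\{\alpha\in\mathbb{Q}\otimes_{\mathbb{Z}}L \mid \langle\alpha,L\rangle\subset\mathbb{Z}\}$. ''Fixed-point-free'' means $\sigma$ fixes no nonzero element of $L$. *)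

(* Lattice L modelled as Z^n inside Q^n (column vectors),
   with rational Gram matrix G; isometry sigma given by a matrix S. *)
From HB Require Import structures.
From mathcomp Require Import all_boot all_order all_algebra.
Set Implicit Arguments. Unset Strict Implicit. Unset Printing Implicit Defensive.
Import Order.TTheory GRing.Theory Num.Theory.
Local Open Scope ring_scope.

Definition form (n : nat) (G : 'M[rat]_n) (x y : 'cV[rat]_n) : rat :=
  (x^T *m G *m y) 0 0.

Definition inL (n : nat) (x : 'cV[rat]_n) : Prop :=
  forall i, x i 0 \is a Num.int.

Definition inDual (n : nat) (G : 'M[rat]_n) (a : 'cV[rat]_n) : Prop :=
  forall b, inL b -> form G a b \is a Num.int.

Definition pos_def_even_lattice (n : nat) (G : 'M[rat]_n) : Prop :=
  [/\ G^T = G,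
      (forall x : 'cV[rat]_n, x != 0 -> 0 < form G x x) &
      (forall x, inL x -> form G x x / 2 \is a Num.int)].

Definition fpf_isometry_of_order (n : nat) (G S : 'M[rat]_n) (p : nat) : Prop :=
  [/\ (forall i j, S i j \is a Num.int),
      S^T *m G *m S = G,
      S ^+ p = 1,
      (forall k, (0 < k < p)%N -> S ^+ k != 1) &
      (forall x, inL x -> S *m x = x -> x = 0)].

Definition s_of (p : nat) : nat := if odd p then (2 * p)%N else p.

Definition c_sigma_val (n : nat) (G S : 'M[rat]_n) (p : nat) (a b : 'cV[rat]_n) : rat :=
  ((s_of p)%:R / p%:R) * \sum_(1 <= i < p) form G (i%:R *: (S ^+ i *m a)) b.

Definition c_sigma_zero (n : nat) (G S : 'M[rat]_n) (p : nat) (a b : 'cV[rat]_n) : Prop :=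
  exists k : int, c_sigma_val G S p a b = (s_of p)%:R * k%:~R.

Definition in_R (n : nat) (G S : 'M[rat]_n) (p : nat) (a : 'cV[rat]_n) : Prop :=
  inL a /\ forall b, inL b -> c_sigma_zero G S p a b.

Definition in_img_dual (n : nat) (G S : 'M[rat]_n) (a : 'cV[rat]_n) : Prop :=
  inL a /\ exists g, inDual G g /\ a = (1 - S) *m g.

(** The weighted orbit sum [W = \sum_(i < p) i σ^i] satisfies
    [(1 - σ) W = W (1 - σ) = -p], because fixed-point-freeness forces the plain
    orbit sum [\sum_(i < p) σ^i] (whose columns are σ-fixed vectors of L) to
    vanish.  Since [c^σ(α, β) = (s/p) <W α, β>], the condition [α ∈ R_L^σ]
    says exactly that [γ := -W α / p] lies in [L°], and then [α = (1 - σ) γ];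
    conversely [α = (1 - σ) γ] forces [γ = -W α / p]. *)

From Pilot Require Import Defs.
From mathcomp Require Import all_boot all_order all_algebra.
Set Implicit Arguments. Unset Strict Implicit. Unset Printing Implicit Defensive.
Import Order.TTheory GRing.Theory Num.Theory.
Local Open Scope ring_scope.
Local Notation form := Defs.form.

Section WeightedPowerSum.
Variables (R : pzRingType) (x : R).

Definition weighted_powsum (m : nat) : R := \sum_(i < m) x ^+ i *+ i.

Lemma subr1_mul_weighted_powsum m :
  (1 - x) * weighted_powsum m = \sum_(i < m) x ^+ i.+1 - x ^+ m *+ m.
Proof.
rewrite /weighted_powsum; elim: m => [|m IH]; first by rewrite !big_ord0 mulr0 subr0.
rewrite !big_ord_recr /= mulrDr IH mulrnAr mulrBl mul1r -exprS mulrSr.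
by rewrite mulrnBl addrA subrK opprD addrA addrAC addrK.
Qed.

Lemma commr_weighted_powsum m : GRing.comm (1 - x) (weighted_powsum m).
Proof.
apply: commr_sum => i _; apply/commrMn/commrX/commr_sym/commrB.
  exact: commr1.
exact: commr_refl.
Qed.

Lemma subr1_weighted_powsum_root m :
  \sum_(i < m) x ^+ i = 0 -> x ^+ m = 1 ->
  (1 - x) * weighted_powsum m = - m%:R /\ weighted_powsum m * (1 - x) = - m%:R.
Proof.
move=> sum0 xm1.
have left : (1 - x) * weighted_powsum m = - m%:R.
  rewrite subr1_mul_weighted_powsum; under eq_bigr do rewrite exprS.
  by rewrite -mulr_sumr sum0 mulr0 xm1 sub0r.
by split; rewrite // -commr_weighted_powsum.
Qed.

End WeightedPowerSum.

Lemma mxOverX (R : pzSemiRingType) n (T : semiringClosed R) (A : 'M[R]_n) k :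
  A \is a mxOver T -> A ^+ k \is a mxOver T.
Proof.
move=> A_T; elim: k => [|k IH]; first by rewrite expr0 mxOver_scalar ?rpred0 ?rpred1.
by rewrite exprS mxOverM.
Qed.

Section FixedPointFree.
Variables (n p : nat) (S : 'M[rat]_n).
Hypotheses (S_int : S \is a mxOver Num.int) (Sp : S ^+ p = 1)
  (S_fpf : forall x, inL x -> S *m x = x -> x = 0).

(* Each column of the orbit sum is an integral σ-fixed vector. *)
Lemma powsum_fpf_eq0 : \sum_(i < p) S ^+ i = 0.
Proof.
set N := \sum_(i < p) S ^+ i.
have SN : S *m N = N.
  by apply/eqP; rewrite mulmxE -subr_eq0 -{2}[N]mul1r -mulrBl -subrX1 Sp subrr.
apply/matrixP => i j; rewrite mxE.
have colN_int : inL (col j N).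
  move=> k; rewrite !mxE summxE rpred_sum // => m _.
  by have /mxOverP := mxOverX m S_int; apply.
have colN_fixed : S *m col j N = col j N by rewrite !colE mulmxA SN.
have /matrixP/(_ i 0) := S_fpf colN_int colN_fixed.
by rewrite !mxE.
Qed.

Lemma subr1_weighted_powsum :
  (1 - S) * weighted_powsum S p = - p%:R /\
  weighted_powsum S p * (1 - S) = - p%:R.
Proof. exact: subr1_weighted_powsum_root powsum_fpf_eq0 Sp. Qed.

End FixedPointFree.

Lemma form_sum n (G : 'M[rat]_n) (I : Type) (r : seq I) (P : pred I)
  (v : I -> 'cV[rat]_n) b :
  form G (\sum_(i <- r | P i) v i) b = \sum_(i <- r | P i) form G (v i) b.
Proof. by rewrite /form raddf_sum !mulmx_suml summxE. Qed.

Lemma form_scale n (G : 'M[rat]_n) (c : rat) x b :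
  form G (c *: x) b = c * form G x b.
Proof. by rewrite /form linearZ /= -!scalemxAl mxE. Qed.

Lemma inDual_scaleNVP n (G : 'M[rat]_n) (c : rat) v :
  inDual G (- c^-1 *: v) <-> forall b, inL b -> form G v b / c \is a Num.int.
Proof. by split=> dual b /dual; rewrite form_scale mulNr mulrC ?rpredN. Qed.

Section CSigma.
Variables (n p : nat) (G S : 'M[rat]_n).
Hypothesis p_gt0 : (0 < p)%N.

Local Notation W := (weighted_powsum S p).

Let p_neq0 : (p%:R : rat) != 0. Proof. by rewrite pnatr_eq0 -lt0n. Qed.

Lemma c_sigma_valE a b :
  c_sigma_val G S p a b = (s_of p)%:R / p%:R * form G (W *m a) b.
Proof.
rewrite /c_sigma_val /weighted_powsum mulmx_suml form_sum; congr (_ * _).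
rewrite -(big_mkord xpredT (fun i => form G (S ^+ i *+ i *m a) b)).
rewrite (big_ltn p_gt0) mulr0n mul0mx -[0 : 'cV_n](scale0r 0) form_scale mul0r add0r.
by apply: eq_bigr => i _; rewrite -scaler_nat scalemxAl.
Qed.

Lemma c_sigma_zeroP a b :
  c_sigma_zero G S p a b <-> form G (W *m a) b / p%:R \is a Num.int.
Proof.
have s_neq0 : ((s_of p)%:R : rat) != 0.
  by rewrite pnatr_eq0 /s_of; case: ifP; rewrite ?muln_eq0 -lt0n p_gt0.
rewrite /c_sigma_zero c_sigma_valE; split=> [[k ck] | /intrP[k Fk]].
  apply/intrP; exists k; apply: (mulfI s_neq0); rewrite -ck.
  by rewrite mulrA mulrAC.
by exists k; rewrite -Fk mulrA mulrAC.
Qed.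

Hypotheses (S_int : S \is a mxOver Num.int) (Sp : S ^+ p = 1)
  (S_fpf : forall x, inL x -> S *m x = x -> x = 0).

Lemma img_dual_weighted_powsumP a :
  (exists g, inDual G g /\ a = (1 - S) *m g) <->
  inDual G (- p%:R^-1 *: (W *m a)).
Proof.
have [subS_W W_subS] := subr1_weighted_powsum S_int Sp S_fpf.
have unscale (M : 'M[rat]_n) v :
    M = - p%:R -> - p%:R^-1 *: (M *m v) = v.
  have -> : - p%:R = (- p%:R)%:M :> 'M[rat]_n.
    by rewrite [RHS]raddfN; congr (- _); rewrite raddfMn.
  by move=> ->; rewrite mul_scalar_mx scalerA mulrNN mulVf // scale1r.
split=> [[g [g_dual ->]] | a_dual]; first by rewrite mulmxA mulmxE unscale.
by exists (- p%:R^-1 *: (W *m a)); split; rewrite // -scalemxAr mulmxA mulmxE unscale.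
Qed.

End CSigma.

Theorem mainTheorem1 (n p : nat) (G S : 'M[rat]_n)
  (hL : pos_def_even_lattice G) (hp : (2 <= p)%N)
  (hS : fpf_isometry_of_order G S p) :
  forall a : 'cV[rat]_n, in_R G S p a <-> in_img_dual G S a.
Proof.
case: hS => S_int _ Sp _ S_fpf a.
have p_gt0 : (0 < p)%N by apply: leq_trans hp.
have S_intmx : S \is a mxOver Num.int by apply/mxOverP.
have img_dual := img_dual_weighted_powsumP G p_gt0 S_intmx Sp S_fpf a.
have dual := inDual_scaleNVP G p%:R (weighted_powsum S p *m a).
split=> -[a_int a_cond]; split=> //.
  by apply/img_dual/dual => b /a_cond /(c_sigma_zeroP _ _ p_gt0).
by move/img_dual/dual: a_cond => a_cond b /a_cond /(c_sigma_zeroP _ _ p_gt0).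
Qed.
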